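(* Let $T$ be an $\mathcal O$-operator on the Lie $\infty$-algebra $(E,M_E)$ with respect to an action $\Phi$ of $E$ on the Lie $\infty$-algebra $(V,M_V)$. Then $M_{V^T}:=\Phi^T+M_V$ is a Lie $\infty$-algebra structure on $V$ (a degree $+1$ coderivation of $\bar S(V)$ with $M_{V^T}^2=0$), and $T:(V,M_{V^T})\to(E,M_E)$ is a Lie $\infty$-morphism.
   Context: Graded vector spaces are $\mathbb Z$-graded, finite dimensional over $\mathbb R$ or $\mathbb C$, with Koszul signs. $\bar S(W)$ is the reduced graded symmetric coalgebra with unshuffle coproduct $\Delta$, Sweedler notation $\Delta(w)=w_{(1)}\otimes w_{(2)}$. A comorphism is a degree $0$ coalgebra morphism; a coderivation of degree $k$ is a degree $k$ map $Q$ with $\Delta Q=(Q\otimes\mathrm{id}+\mathrm{id}\otimes Q)\Delta$. A Lie $\infty$-algebra $(E,M_E)$ is a degree $+1$ coderivation of $\bar S(E)$ with $M_E^2=0$; a Lie $\infty$-morphism is a comorphism $F$ with $F\circ M_E=M_V\circ F$. $\mathrm{Coder}(\bar S(V))[1]$ is the symmetric DGLA with $\partial_{M_V}Q=-M_VQ+(-1)^{\deg Q}QM_V$, $[Q,P]=(-1)^{\deg Q}(QP-(-1)^{\deg Q\deg P}PQ)$. An action of $(E,M_E)$ on $(V,M_V)$ is a degree $+1$ linear map $\bar S(E)\to\mathrm{Coder}(\bar S(V))$, $x\mapsto\Phi_x$, with $\Phi_{M_E(x)}=\partial_{M_V}\Phi_x+\frac12[\Phi_{x_{(1)}},\Phi_{x_{(2)}}]$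 for all $x$ (last term $0$ for $x\in E$). For a degree $0$ map $T:\bar S(V)\to\bar S(E)$, $\Phi^T:\bar S(V)\to\bar S(V)$ is defined by $\Phi^T(v)=0$ for $v\in V$ and $\Phi^T(v)=\Phi_{T(v_{(1)})}v_{(2)}$ for $v\in S^{\ge2}(V)$. An $\mathcal O$-operator on $E$ with respect to $\Phi$ is a comorphism $T:\bar S(V)\to\bar S(E)$ with $M_E\circ T=T\circ(\Phi^T+M_V)$. *)

(* Concrete model of the reduced graded symmetric coalgebra
   \bar S(W) of a finite dimensional Z-graded vector space W, given by a
   homogeneous basis 'I_n with degree function d : 'I_n -> int. *)
From mathcomp Require Import all_boot all_order all_algebra.
Set Implicit Arguments. Unset Strict Implicit. Unset Printing Implicit Defensive.
Import Order.TTheory GRing.Theory Num.Theory.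
Local Open Scope ring_scope.

Section LieInfty.
Variable K : numFieldType.

Definition ksign (a b : int) : K := (-1) ^+ (absz a * absz b)%N.

(* A basis monomial of \bar S(W) is a nonempty sequence of basis vectors,
   sorted (nondecreasing), in which odd-degree basis vectors occur at most
   once; it stands for the (graded symmetric) product in that order. *)
Definition valid n (d : 'I_n -> int) (m : seq 'I_n) : bool :=
  [&& m != [::], sorted (fun i j : 'I_n => (i <= j)%N) m &
      all (fun i => odd (absz (d i)) ==> (count_mem i m <= 1)%N) m].

Definition mdeg n (d : 'I_n -> int) (m : seq 'I_n) : int := \sum_(i <- m) d i.

Definition fsum (X : Type) := seq (K * X).
Definition coef (X : eqType) (s : fsum X) (x : X) : K :=
  \sum_(a <- s | a.2 == x) a.1.
Definition fscale (X : Type) (c : K) (s : fsum X) : fsum X :=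
  [seq (c * a.1, a.2) | a <- s].
Definition tprod (X Y : Type) (s1 : fsum X) (s2 : fsum Y) : fsum (X * Y) :=
  [seq (a.1 * b.1, (a.2, b.2)) | a <- s1, b <- s2].

Definition eqS n (d : 'I_n -> int) (s1 s2 : fsum (seq 'I_n)) : Prop :=
  forall p, valid d p -> coef s1 p = coef s2 p.
Definition eqT n (d : 'I_n -> int) (s1 s2 : fsum (seq 'I_n * seq 'I_n)) : Prop :=
  forall p q, valid d p -> valid d q -> coef s1 (p, q) = coef s2 (p, q).

Definition lmap (n1 n2 : nat) := seq 'I_n1 -> fsum (seq 'I_n2).

Definition lapp n1 n2 (d1 : 'I_n1 -> int) (f : lmap n1 n2) (s : fsum (seq 'I_n1))
  : fsum (seq 'I_n2) :=
  flatten [seq fscale a.1 (f a.2) | a <- s & valid d1 a.2].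

Definition lcomp n1 n2 n3 (d2 : 'I_n2 -> int) (g : lmap n2 n3) (f : lmap n1 n2)
  : lmap n1 n3 := fun m => lapp d2 g (f m).
Definition ladd n1 n2 (f g : lmap n1 n2) : lmap n1 n2 := fun m => f m ++ g m.
Definition lscale n1 n2 (c : K) (f : lmap n1 n2) : lmap n1 n2 :=
  fun m => fscale c (f m).
Definition lzero n1 n2 : lmap n1 n2 := fun _ => [::].
Definition lid n : lmap n n := fun m => [:: (1, m)].

Definition eqL n1 n2 (d1 : 'I_n1 -> int) (d2 : 'I_n2 -> int) (f g : lmap n1 n2) : Prop :=
  forall m, valid d1 m -> eqS d2 (f m) (g m).

Definition hdeg n1 n2 (d1 : 'I_n1 -> int) (d2 : 'I_n2 -> int) (f : lmap n1 n2)
  (k : int) : Prop :=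
  forall m p, valid d1 m -> valid d2 p -> coef (f m) p != 0 ->
    mdeg d2 p = mdeg d1 m + k.

Fixpoint masks (k : nat) : seq (seq bool) :=
  if k is k'.+1 then [seq b :: s | b <- [:: true; false], s <- masks k']
  else [:: [::]].

(* number of pairs (position i in J) < (position j in I) of odd elements:
   the Koszul sign of the unshuffle moving the I-part in front *)
Fixpoint kpairs (t : seq (bool * int)) : nat :=
  match t with
  | [::] => 0
  | (bi, di) :: t' =>
      ((if ~~ bi && odd (absz di)
        then count (fun x => x.1 && odd (absz x.2)) t' else 0)
       + kpairs t')%N
  end.

Definition cop n (d : 'I_n -> int) (m : seq 'I_n) : fsum (seq 'I_n * seq 'I_n) :=
  [seq ((-1) ^+ kpairs (zip b (map d m)), (mask b m, mask (map negb b) m))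
  | b <- [seq b <- masks (size m) |
           (mask b m != [::]) && (mask (map negb b) m != [::])]].

Definition copS n (d : 'I_n -> int) (s : fsum (seq 'I_n)) : fsum (seq 'I_n * seq 'I_n) :=
  flatten [seq fscale a.1 (cop d a.2) | a <- s & valid d a.2].

(* (f (x) g)(x (x) y) = (-1)^{|g||x|} f(x) (x) g(y), g of degree kg *)
Definition tens n1 n2 (d1 : 'I_n1 -> int) (f g : lmap n1 n2) (kg : int)
  (s : fsum (seq 'I_n1 * seq 'I_n1)) : fsum (seq 'I_n2 * seq 'I_n2) :=
  flatten [seq fscale (a.1 * ksign kg (mdeg d1 a.2.1)) (tprod (f a.2.1) (g a.2.2))
          | a <- s & valid d1 a.2.1 && valid d1 a.2.2].

Definition is_coder n (d : 'I_n -> int) (Q : lmap n n) (k : int) : Prop :=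
  hdeg d d Q k /\
  forall m, valid d m ->
    eqT d (copS d (Q m)) (tens d Q (@lid n) 0 (cop d m) ++ tens d (@lid n) Q k (cop d m)).

Definition is_comorphism n1 n2 (d1 : 'I_n1 -> int) (d2 : 'I_n2 -> int)
  (F : lmap n1 n2) : Prop :=
  hdeg d1 d2 F 0 /\
  forall m, valid d1 m -> eqT d2 (copS d2 (F m)) (tens d1 F F 0 (cop d1 m)).

Definition lie_inf n (d : 'I_n -> int) (M : lmap n n) : Prop :=
  is_coder d M 1 /\ eqL d d (lcomp d M M) (@lzero n n).

Definition lie_inf_morph n1 n2 (d1 : 'I_n1 -> int) (d2 : 'I_n2 -> int)
  (M1 : lmap n1 n1) (M2 : lmap n2 n2) (F : lmap n1 n2) : Prop :=
  is_comorphism d1 d2 F /\ eqL d1 d2 (lcomp d1 F M1) (lcomp d2 M2 F).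

(* ---------- the symmetric DGLA Coder(\bar S(V))[1] ----------
   degrees kQ, kP are the degrees of the coderivations Q, P *)
Definition dgla_d n (d : 'I_n -> int) (M Q : lmap n n) (kQ : int) : lmap n n :=
  ladd (lscale (-1) (lcomp d M Q)) (lscale ((-1) ^+ absz kQ) (lcomp d Q M)).

Definition dgla_br n (d : 'I_n -> int) (Q P : lmap n n) (kQ kP : int) : lmap n n :=
  lscale ((-1) ^+ absz kQ)
    (ladd (lcomp d Q P) (lscale (- ksign kQ kP) (lcomp d P Q))).

(* ---------- actions ----------
   Phi : \bar S(E) -> Coder(\bar S(V)) given on basis monomials of \bar S(E) *)
Definition Phis nE nV (dE : 'I_nE -> int) (Phi : seq 'I_nE -> lmap nV nV)
  (s : fsum (seq 'I_nE)) : lmap nV nV :=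
  fun v => flatten [seq fscale a.1 (Phi a.2 v) | a <- s & valid dE a.2].

Definition is_action nE nV (dE : 'I_nE -> int) (dV : 'I_nV -> int)
  (ME : lmap nE nE) (MV : lmap nV nV) (Phi : seq 'I_nE -> lmap nV nV) : Prop :=
  (forall x, valid dE x -> is_coder dV (Phi x) (mdeg dE x + 1)) /\
  (forall x, valid dE x ->
     eqL dV dV (Phis dE Phi (ME x))
       (ladd (dgla_d dV MV (Phi x) (mdeg dE x + 1))
             (fun v => flatten
                [seq fscale (a.1 / 2)
                   (dgla_br dV (Phi a.2.1) (Phi a.2.2)
                      (mdeg dE a.2.1 + 1) (mdeg dE a.2.2 + 1) v)
                | a <- cop dE x]))).

Definition PhiT nE nV (dE : 'I_nE -> int) (dV : 'I_nV -> int)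
  (Phi : seq 'I_nE -> lmap nV nV) (T : lmap nV nE) : lmap nV nV :=
  fun v => if (size v <= 1)%N then [::]
           else flatten [seq fscale a.1 (Phis dE Phi (T a.2.1) a.2.2) | a <- cop dV v].

Definition O_operator nE nV (dE : 'I_nE -> int) (dV : 'I_nV -> int)
  (ME : lmap nE nE) (MV : lmap nV nV) (Phi : seq 'I_nE -> lmap nV nV)
  (T : lmap nV nE) : Prop :=
  is_comorphism dV dE T /\
  eqL dV dE (lcomp dE ME T) (lcomp dV T (ladd (PhiT dE dV Phi T) MV)).

End LieInfty.

(* The morphism property is the O-operator identity. *)
From mathcomp Require Import all_boot all_order all_algebra zify ring.
Set Implicit Arguments. Unset Strict Implicit. Unset Printing Implicit Defensive.
Import Order.TTheory GRing.Theory Num.Theory.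
Local Open Scope ring_scope.

Section FormalSums.
Variable K : numFieldType.

Definition wsum (X : Type) (P : pred X) (s : fsum K X) (g : X -> K) : K :=
  \sum_(a <- s | P a.2) a.1 * g a.2.

Lemma wsum_cat X P (s1 s2 : fsum K X) g :
  wsum P (s1 ++ s2) g = wsum P s1 g + wsum P s2 g.
Proof. by rewrite /wsum big_cat. Qed.

Lemma wsum_fscale X P c (s : fsum K X) g : wsum P (fscale c s) g = c * wsum P s g.
Proof.
rewrite /wsum /fscale big_map mulr_sumr.
by apply: eq_bigr => a _ /=; rewrite mulrA.
Qed.

Lemma wsum_bind_weighted X Y (P : pred X) (Q : pred Y) (c : X -> K)
    (f : X -> fsum K Y) s g :
  wsum Q (flatten [seq fscale (a.1 * c a.2) (f a.2) | a <- s & P a.2]) g =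
  wsum P s (fun x => c x * wsum Q (f x) g).
Proof.
rewrite /wsum big_flatten /= big_map big_filter; apply: eq_bigr => a _.
by rewrite -/(wsum Q _ g) wsum_fscale mulrA.
Qed.

Lemma wsum_bind X Y (P : pred X) (Q : pred Y) (f : X -> fsum K Y) s g :
  wsum Q (flatten [seq fscale a.1 (f a.2) | a <- s & P a.2]) g =
  wsum P s (fun x => wsum Q (f x) g).
Proof.
rewrite /wsum big_flatten /= big_map big_filter; apply: eq_bigr => a _.
by rewrite -/(wsum Q _ g) wsum_fscale.
Qed.

Lemma wsum_ext X (P : pred X) (s : fsum K X) (g g' : X -> K) :
  (forall x, P x -> g x = g' x) -> wsum P s g = wsum P s g'.
Proof. by move=> h; apply: eq_bigr => a /h ->. Qed.

Lemma wsumD X P (s : fsum K X) g g' :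
  wsum P s (fun x => g x + g' x) = wsum P s g + wsum P s g'.
Proof. by rewrite /wsum -big_split; apply: eq_bigr => a _; rewrite mulrDr. Qed.

Lemma wsumN X P (s : fsum K X) g : wsum P s (fun x => - g x) = - wsum P s g.
Proof. by rewrite /wsum -sumrN; apply: eq_bigr => a _; rewrite mulrN. Qed.

Lemma wsumZ X P (s : fsum K X) c g : wsum P s (fun x => c * g x) = c * wsum P s g.
Proof. by rewrite /wsum mulr_sumr; apply: eq_bigr => a _; rewrite mulrCA. Qed.

Lemma wsum_comb X (P : pred X) (s : fsum K X) c1 c2 c3 g h1 h2 :
  (forall x, g x = c1 * (c2 * (h1 x - c3 * h2 x))) ->
  wsum P s g = c1 * (c2 * (wsum P s h1 - c3 * wsum P s h2)).
Proof.
move=> h; rewrite (wsum_ext _ (fun x _ => h x)) !wsumZ.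
by rewrite (wsumD P s h1 (fun x => - (c3 * h2 x))) wsumN wsumZ.
Qed.

Lemma wsum_exchange X Y P Q (s : fsum K X) (t : fsum K Y) (g : X -> Y -> K) :
  wsum P s (fun x => wsum Q t (g x)) = wsum Q t (fun y => wsum P s (fun x => g x y)).
Proof.
rewrite /wsum; under eq_bigr do rewrite mulr_sumr.
rewrite exchange_big /=; apply: eq_bigr => b _; rewrite mulr_sumr.
by apply: eq_bigr => a _; rewrite mulrCA.
Qed.

Lemma wsum_tprod X Y (P : pred X) (Q : pred Y) (s : fsum K X) (t : fsum K Y) g :
  wsum (fun pq => P pq.1 && Q pq.2) (tprod s t) g =
  wsum P s (fun p => wsum Q t (fun q => g (p, q))).
Proof.
rewrite /wsum /tprod big_mkcond big_allpairs_dep /= [RHS]big_mkcond /=.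
apply: eq_bigr => a _; case: (P a.2) => /=; last by rewrite big1.
rewrite mulr_sumr [RHS]big_mkcond; apply: eq_bigr => b _.
by case: (Q b.2); rewrite ?mulr0 // mulrA.
Qed.

Lemma coefE (X : eqType) (s : fsum K X) y : coef s y = wsum (pred1 y) s (fun _ => 1).
Proof. by rewrite /coef /wsum; apply: eq_bigr => a _; rewrite mulr1. Qed.

Lemma coef_bind X (Y : eqType) (P : pred X) (f : X -> fsum K Y) s y :
  coef (flatten [seq fscale a.1 (f a.2) | a <- s & P a.2]) y =
  wsum P s (fun x => coef (f x) y).
Proof. by rewrite coefE wsum_bind; apply: eq_bigr => a _; rewrite coefE. Qed.

Lemma coef_cat (X : eqType) (s1 s2 : fsum K X) y :
  coef (s1 ++ s2) y = coef s1 y + coef s2 y.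
Proof. by rewrite !coefE wsum_cat. Qed.

Lemma coef_fscale (X : eqType) c (s : fsum K X) y : coef (fscale c s) y = c * coef s y.
Proof. by rewrite !coefE wsum_fscale. Qed.

Lemma coef_cons (X : eqType) (a : K * X) s x :
  coef (a :: s) x = (a.2 == x)%:R * a.1 + coef s x.
Proof. by rewrite /coef big_cons; case: eqP; rewrite ?mul1r ?mul0r ?add0r. Qed.

Lemma coef_tprod (X Y : eqType) (s : fsum K X) (t : fsum K Y) p q :
  coef (tprod s t) (p, q) = coef s p * coef t q.
Proof.
rewrite !coefE (_ : wsum _ _ _ =
  wsum (fun pq : X * Y => pred1 p pq.1 && pred1 q pq.2) (tprod s t) (fun _ => 1)) //.
by rewrite wsum_tprod mulrC -wsumZ; apply: eq_bigr => x _; rewrite mulr1.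
Qed.

Lemma wsum_coef (X : eqType) (P : pred X) (s : fsum K X) g (U : seq X) :
  uniq U -> {subset map snd s <= U} ->
  wsum P s g = \sum_(x <- U | P x) coef s x * g x.
Proof.
move=> uU; elim: s => [|a s IH] sU.
  by rewrite /wsum big_nil big1 // => x _; rewrite /coef big_nil mul0r.
have aU : a.2 \in U by apply: sU; rewrite inE eqxx.
rewrite /wsum big_cons -/(wsum P s g) IH; last first.
  by move=> x xs; apply: sU; rewrite inE xs orbT.
under [RHS]eq_bigr do rewrite coef_cons mulrDl.
rewrite big_split /= [X in _ = X + _]big_mkcond (bigD1_seq a.2) //=.
rewrite [X in _ = _ + X + _]big1 ?addr0.
  by case: (P a.2); rewrite ?eqxx ?mul1r ?add0r.
by move=> x /negPf xa; rewrite eq_sym xa; case: (P x); rewrite ?mul0r.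
Qed.

Lemma wsum_eq (X : eqType) (P : pred X) (s s' : fsum K X) g :
  (forall x, P x -> coef s x = coef s' x) -> wsum P s g = wsum P s' g.
Proof.
move=> h; set U := undup (map snd (s ++ s')).
have uU : uniq U by exact: undup_uniq.
rewrite (@wsum_coef _ P s g U) // ?(@wsum_coef _ P s' g U) //.
- by apply: eq_bigr => x Px; rewrite h.
- by move=> x xs; rewrite mem_undup map_cat mem_cat xs orbT.
- by move=> x xs; rewrite mem_undup map_cat mem_cat xs.
Qed.

Lemma wsum_supp (X : eqType) (P : pred X) (s : fsum K X) g g' :
  (forall x, P x -> coef s x != 0 -> g x = g' x) -> wsum P s g = wsum P s g'.
Proof.
move=> h; have sU : {subset map snd s <= undup (map snd s)}.
  by move=> x; rewrite mem_undup.
rewrite !(@wsum_coef _ P s _ _ (undup_uniq _) sU).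
apply: eq_bigr => x Px; have [->|nz] := eqVneq (coef s x) 0; first by rewrite !mul0r.
by rewrite h.
Qed.

Lemma sum_neq0_witness (I : eqType) (r : seq I) (F : I -> K) :
  \sum_(i <- r) F i != 0 -> exists2 i, i \in r & F i != 0.
Proof.
elim: r => [|i r IH]; first by rewrite big_nil eqxx.
rewrite big_cons; have [h|h] := eqVneq (F i) 0.
  by rewrite h add0r => /IH [j jr Fj]; exists j => //; rewrite inE jr orbT.
by move=> _; exists i => //; rewrite inE eqxx.
Qed.

Lemma wsum_neq0_witness (X : eqType) (P : pred X) (s : fsum K X) g :
  wsum P s g != 0 -> exists x, [/\ P x, coef s x != 0 & g x != 0].
Proof.
have sU : {subset map snd s <= undup (map snd s)} by move=> x; rewrite mem_undup.
rewrite (@wsum_coef _ P s g _ (undup_uniq _) sU) -big_filter.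
case/sum_neq0_witness => x; rewrite mem_filter => /andP[Px _].
have [->|nz] := eqVneq (coef s x) 0; first by rewrite mul0r eqxx.
have [->|gz] := eqVneq (g x) 0; first by rewrite mulr0 eqxx.
by move=> _; exists x.
Qed.

End FormalSums.

Definition par (k : int) : bool := odd (absz k).

Lemma sign_par (R : pzRingType) (k : int) : (-1) ^+ absz k = (-1) ^+ par k :> R.
Proof. by rewrite /par signr_odd. Qed.

Lemma parD a b : par (a + b) = par a (+) par b.
Proof.
have sign_exprz (k : int) : (-1) ^+ absz k = (-1) ^ k :> rat.
  by case: k => n //=; rewrite /exprz /= invr_sign.
apply: (@signr_inj rat); rewrite signr_addb -!(@sign_par rat) !sign_exprz.
exact: expfzDr.
Qed.

Section Signs.
Variable K : numFieldType.

Lemma ksignE (a b : int) : ksign K a b = (-1) ^+ (par a && par b).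
Proof. by rewrite /ksign /par -signr_odd oddM. Qed.

Lemma ksign0 k : ksign K 0 k = 1.
Proof. by rewrite ksignE. Qed.

Definition sgz (k : int) : K := (-1) ^+ absz k.

Lemma sgz_succ a : sgz (a + 1) = - ksign K 1 a.
Proof.
rewrite /sgz sign_par ksignE parD /= addbT.
by case: (par a); rewrite /= ?expr0 ?expr1 ?opprK.
Qed.

(* Sign bookkeeping when a degree-1 map passes u ⊗ v with u, v swapped. *)
Lemma ksign_swap_succ (a b : int) : ksign K a b * ksign K (b + 1) a = ksign K 1 a.
Proof.
by rewrite !ksignE -signr_addb parD /par /=; case: (odd `|a|); case: (odd `|b|).
Qed.

(* Sign bookkeeping for swapping two shifted arguments of the bracket. *)
Lemma ksign_swap_shift (a b : int) :
  ksign K a b * sgz (b + 1) * ksign K (b + 1) (a + 1) = ksign K 1 a.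
Proof.
rewrite /sgz sign_par !ksignE !parD /=.
by case: (par a); case: (par b);
  rewrite /= ?expr0 ?expr1 ?mulr1 ?mul1r ?mulrNN ?mulN1r ?mulrN1 ?opprK ?mulr1 ?mul1r.
Qed.

End Signs.

Section Unshuffles.
Variables (K : numFieldType) (n : nat) (d : 'I_n -> int).
Local Notation T := 'I_n.

Definition odd_elt (i : T) := par (d i).
Definition sgb (b : bool) : K := (-1) ^+ b.

Fixpoint unshuffles (m : seq T) : seq (K * (seq T * seq T)) :=
  match m with
  | [::] => [:: (1, ([::], [::]))]
  | x :: m' => [seq (a.1, (x :: a.2.1, a.2.2)) | a <- unshuffles m'] ++
      [seq (a.1 * sgb (odd_elt x && odd (count odd_elt a.2.1)), (a.2.1, x :: a.2.2))
      | a <- unshuffles m']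
  end.

Lemma size_masks k s : s \in masks k -> size s = k.
Proof.
elim: k s => [|k IH] s /=; first by rewrite inE => /eqP ->.
by rewrite cats0 mem_cat => /orP[] /mapP[s' /IH <- ->].
Qed.

Lemma count_zip (s : seq bool) (m : seq T) : size s = size m ->
  count (fun x : bool * int => x.1 && odd (absz x.2)) (zip s (map d m)) =
  count odd_elt (mask s m).
Proof. by elim: m s => [|x m IH] [|b s] //= [] /IH ->; case: b. Qed.

Lemma masks_unshuffles m :
  [seq ((-1) ^+ kpairs (zip b (map d m)), (mask b m, mask (map negb b) m))
  | b <- masks (size m)] = unshuffles m.
Proof.
elim: m => [|x m IH] //=.
rewrite cats0 map_cat -!map_comp -IH -!map_comp; congr (_ ++ _).
apply/eq_in_map => s sm /=.
rewrite (count_zip (size_masks sm)) /sgb /odd_elt /par exprD mulrC.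
by case: (odd `|d x|) => //=; rewrite signr_odd.
Qed.

Lemma copE m : cop K d m = [seq a <- unshuffles m | (a.2.1 != [::]) && (a.2.2 != [::])].
Proof. by rewrite /cop -masks_unshuffles filter_map map_comp. Qed.

Lemma unshuffles_count m a : a \in unshuffles m ->
  forall P, (count P a.2.1 + count P a.2.2 = count P m)%N.
Proof.
elim: m a => [|x m IH] a /=; first by rewrite inE => /eqP -> P.
by rewrite mem_cat => /orP[] /mapP[b /IH bm ->] P /=; rewrite -(bm P); case: (P x) => /=; lia.
Qed.

Lemma unshuffles_subseq m a : a \in unshuffles m -> subseq a.2.1 m && subseq a.2.2 m.
Proof.
elim: m a => [|x m IH] a; first by rewrite inE => /eqP ->.
have sc (s : seq T) : subseq s m -> subseq s (x :: m).
  by move=> h; apply: subseq_trans h (subseq_cons _ _).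
have scc (s : seq T) : subseq s m -> subseq (x :: s) (x :: m).
  by move=> h; rewrite /= eqxx.
rewrite [unshuffles _]/= mem_cat.
by case/orP=> /mapP[b /IH /andP[b1 b2] ->]; apply/andP; split; first [exact: scc | exact: sc].
Qed.

Definition ush_sum m (F : seq T -> seq T -> K) : K :=
  \sum_(a <- unshuffles m) a.1 * F a.2.1 a.2.2.

Definition swap_sign (p q : seq T) : K :=
  sgb (odd (count odd_elt p) && odd (count odd_elt q)).

Lemma ush_sum_nil F : ush_sum [::] F = F [::] [::].
Proof. by rewrite /ush_sum big_seq1 mul1r. Qed.

Lemma ush_sum_cons x m F : ush_sum (x :: m) F =
  ush_sum m (fun p q => F (x :: p) q) +
  ush_sum m (fun p q => sgb (odd_elt x && odd (count odd_elt p)) * F p (x :: q)).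
Proof.
rewrite /ush_sum /= big_cat !big_map /=; congr (_ + _).
by apply: eq_bigr => a _; rewrite mulrA.
Qed.

Lemma ush_sum_ext_in m F G : (forall a, a \in unshuffles m -> F a.2.1 a.2.2 = G a.2.1 a.2.2) ->
  ush_sum m F = ush_sum m G.
Proof.
move=> h; rewrite /ush_sum big_seq_cond [RHS]big_seq_cond.
by apply: eq_bigr => a /andP[/h ->].
Qed.

Lemma ush_sum_ext m F G : (forall p q, F p q = G p q) -> ush_sum m F = ush_sum m G.
Proof. by move=> h; apply: ush_sum_ext_in => a _; apply: h. Qed.

Lemma ush_sum0 m : ush_sum m (fun _ _ => 0) = 0.
Proof. by rewrite /ush_sum big1 // => a _; rewrite mulr0. Qed.

Lemma ush_sumD m F G : ush_sum m (fun p q => F p q + G p q) = ush_sum m F + ush_sum m G.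
Proof. by rewrite /ush_sum -big_split; apply: eq_bigr => a _; rewrite mulrDr. Qed.

Lemma ush_sumZ m c F : ush_sum m (fun p q => c * F p q) = c * ush_sum m F.
Proof. by rewrite /ush_sum mulr_sumr; apply: eq_bigr => a _; rewrite mulrCA. Qed.

Lemma sgbM b1 b2 : sgb b1 * sgb b2 = sgb (b1 (+) b2).
Proof. by rewrite /sgb signr_addb. Qed.

Lemma count_cons_odd x p :
  odd (count odd_elt (x :: p)) = odd_elt x (+) odd (count odd_elt p).
Proof. by rewrite /= oddD oddb. Qed.

Lemma ush_sum_cocomm m F : ush_sum m F = ush_sum m (fun p q => swap_sign p q * F q p).
Proof.
elim: m F => [|x m IH] F; first by rewrite !ush_sum_nil /swap_sign /sgb expr0 mul1r.
rewrite !ush_sum_cons (IH (fun p q => F (x :: p) q)) addrC.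
rewrite (IH (fun p q => sgb (odd_elt x && odd (count odd_elt p)) * F p (x :: q))).
congr (_ + _); apply: ush_sum_ext => p q;
  rewrite /swap_sign !count_cons_odd !mulrA sgbM;
  by case: (odd_elt x); case: (odd (count odd_elt p)); case: (odd (count odd_elt q)).
Qed.

Lemma ush_sum_coassoc m (F : seq T -> seq T -> seq T -> K) :
  ush_sum m (fun p q => ush_sum q (F p)) = ush_sum m (fun p q => ush_sum p (fun u w => F u w q)).
Proof.
elim: m F => [|x m IH] F; first by rewrite !ush_sum_nil.
rewrite !ush_sum_cons.
under [X in _ + X = _]ush_sum_ext do rewrite ush_sum_cons mulrDr -!ush_sumZ.
under [X in _ = X + _]ush_sum_ext do rewrite ush_sum_cons.
rewrite !ush_sumD (IH (fun u w z => F (x :: u) w z)).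
rewrite (IH (fun u w z => sgb (odd_elt x && odd (count odd_elt u)) * F u (x :: w) z)).
rewrite (IH (fun u w z => sgb (odd_elt x && odd (count odd_elt u)) *
  (sgb (odd_elt x && odd (count odd_elt w)) * F u w (x :: z)))).
rewrite addrA; congr (_ + _).
apply: ush_sum_ext_in => a am; rewrite -ush_sumZ; apply: ush_sum_ext_in => b bm.
rewrite mulrA sgbM; congr (sgb _ * _).
by rewrite -(unshuffles_count bm odd_elt) oddD; case: (odd_elt x).
Qed.

Definition cop_sum m (F : seq T -> seq T -> K) : K :=
  \sum_(a <- cop K d m) a.1 * F a.2.1 a.2.2.

Definition nonempty2 (p q : seq T) := (p != [::]) && (q != [::]).

Lemma cop_sumE m F : cop_sum m F = ush_sum m (fun p q => if nonempty2 p q then F p q else 0).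
Proof.
rewrite /cop_sum copE big_filter /ush_sum big_mkcond; apply: eq_bigr => a _.
by rewrite /nonempty2; case: ifP; rewrite ?mulr0.
Qed.

Lemma cop_sum_ext_in m F G : (forall a, a \in cop K d m -> F a.2.1 a.2.2 = G a.2.1 a.2.2) ->
  cop_sum m F = cop_sum m G.
Proof.
move=> h; rewrite /cop_sum big_seq_cond [RHS]big_seq_cond.
by apply: eq_bigr => a /andP[/h ->].
Qed.

Lemma cop_sum_ext m F G : (forall p q, F p q = G p q) -> cop_sum m F = cop_sum m G.
Proof. by move=> h; apply: cop_sum_ext_in => a _; apply: h. Qed.

Lemma cop_sumD m F G : cop_sum m (fun p q => F p q + G p q) = cop_sum m F + cop_sum m G.
Proof. by rewrite /cop_sum -big_split; apply: eq_bigr => a _; rewrite mulrDr. Qed.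

Lemma cop_sumZ m c F : cop_sum m (fun p q => c * F p q) = c * cop_sum m F.
Proof. by rewrite /cop_sum mulr_sumr; apply: eq_bigr => a _; rewrite mulrCA. Qed.

Lemma cop_sumN m F : cop_sum m (fun p q => - F p q) = - cop_sum m F.
Proof. by rewrite /cop_sum -sumrN; apply: eq_bigr => a _; rewrite mulrN. Qed.

Lemma cop_sum0 m : cop_sum m (fun _ _ => 0) = 0.
Proof. by rewrite /cop_sum big1 // => a _; rewrite mulr0. Qed.

Lemma cop_sum_cocomm m F : cop_sum m F = cop_sum m (fun p q => swap_sign p q * F q p).
Proof.
rewrite !cop_sumE ush_sum_cocomm; apply: ush_sum_ext => p q.
by rewrite /nonempty2 andbC; case: ifP; rewrite ?mulr0.
Qed.

Lemma cop_sum_coassoc m (F : seq T -> seq T -> seq T -> K) :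
  cop_sum m (fun p q => cop_sum q (F p)) = cop_sum m (fun p q => cop_sum p (fun u w => F u w q)).
Proof.
pose G u w z := if (u != [::]) && (w != [::]) && (z != [::]) then F u w z else 0.
rewrite !cop_sumE; transitivity (ush_sum m (fun p q => ush_sum q (G p))).
  apply: ush_sum_ext => p q; rewrite cop_sumE /G /nonempty2.
  have [->|qn] := eqVneq q [::]; first by rewrite !ush_sum_nil !andbF.
  by rewrite /= andbT; case: (p != [::]); rewrite ?ush_sum0.
rewrite ush_sum_coassoc; apply: ush_sum_ext => p q; rewrite cop_sumE /G /nonempty2.
have [->|pn] := eqVneq p [::]; first by rewrite !ush_sum_nil.
rewrite /=; case: (q != [::]) => /=; last first.
  by rewrite (@ush_sum_ext _ _ (fun _ _ => 0)) ?ush_sum0 // => u w; rewrite andbF.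
by apply: ush_sum_ext => u w; rewrite andbT.
Qed.

Lemma par_mdeg p : par (mdeg d p) = odd (count odd_elt p).
Proof.
elim: p => [|x p IH]; first by rewrite /mdeg big_nil.
by move: IH; rewrite /mdeg big_cons parD => ->; rewrite count_cons_odd.
Qed.

Lemma swap_signE p q : swap_sign p q = ksign K (mdeg d p) (mdeg d q).
Proof. by rewrite ksignE !par_mdeg. Qed.

Lemma valid_subseq m p : valid d m -> p != [::] -> subseq p m ->
  (forall P, count P p <= count P m)%N -> valid d p.
Proof.
case/and3P=> _ sm am pn sp cp; apply/and3P; split => //.
  by apply: (subseq_sorted _ sp sm) => i j k; exact: leq_trans.
apply/allP => i ip; have im := mem_subseq sp ip.
by move/allP: am => /(_ _ im) /implyP h; apply/implyP => /h; exact: leq_trans.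
Qed.

Lemma cop_valid m a : valid d m -> a \in cop K d m -> valid d a.2.1 && valid d a.2.2.
Proof.
move=> vm; rewrite copE mem_filter => /andP[/andP[n1 n2] am].
case/andP: (unshuffles_subseq am) => s1 s2; have c := unshuffles_count am.
by apply/andP; split; apply: (valid_subseq vm) => // P; rewrite -(c P) ?leq_addr ?leq_addl.
Qed.

Lemma cop_mdeg m a : a \in cop K d m -> mdeg d a.2.1 + mdeg d a.2.2 = mdeg d m.
Proof.
rewrite copE mem_filter => /andP[_ am].
rewrite /mdeg -big_cat; apply/esym/perm_big.
by apply/allP => x _; apply/eqP; rewrite count_cat; exact/esym/unshuffles_count.
Qed.

Lemma cop_small m : (size m <= 1)%N -> cop K d m = [::].
Proof.
move=> sm; rewrite copE; apply/eqP; rewrite -[_ == _]negbK -has_filter.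
apply/hasP => -[a am /andP[n1 n2]]; have := unshuffles_count am predT.
rewrite !count_predT => h; move: sm; rewrite -h.
by case: a.2.1 n1 => // ? ? _; case: a.2.2 n2 => // ? ? _; rewrite /= addnS addSn.
Qed.

End Unshuffles.

Section LinearMaps.
Variables (K : numFieldType) (n : nat) (d : 'I_n -> int).
Local Notation T := 'I_n.

Definition valid2 (pq : seq T * seq T) := valid d pq.1 && valid d pq.2.

Lemma wsum_lid (P : pred (seq T)) (x : seq T) g : P x -> wsum P (lid K x) g = g x.
Proof. by move=> Px; rewrite /wsum /lid big_cons big_nil Px /= mul1r addr0. Qed.

Lemma wsum_cop (m : seq T) (G : seq T * seq T -> K) : valid d m ->
  wsum valid2 (cop K d m) G = cop_sum d m (fun u w => G (u, w)).
Proof.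
move=> vm; rewrite /wsum /cop_sum big_seq_cond [RHS]big_seq_cond; apply: eq_big => // a.
case am: (a \in cop K d m); rewrite ?andbF ?andbT //=.
  by rewrite /valid2 (cop_valid vm am).
by case: a => ? [].
Qed.

Lemma wsum_cop_sum X (P : pred X) (s : fsum K X) m (F : X -> seq T -> seq T -> K) :
  wsum P s (fun x => cop_sum d m (F x)) = cop_sum d m (fun u w => wsum P s (fun x => F x u w)).
Proof.
rewrite /wsum /cop_sum; under eq_bigr do rewrite mulr_sumr.
rewrite exchange_big /=; apply: eq_bigr => b _; rewrite mulr_sumr.
by apply: eq_bigr => a _; rewrite mulrCA.
Qed.

Lemma wsum_tens n2 (f g : lmap K n n2) k s Q h :
  wsum Q (tens d f g k s) h =
  wsum valid2 s (fun pq => ksign K k (mdeg d pq.1) * wsum Q (tprod (f pq.1) (g pq.2)) h).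
Proof.
exact: (wsum_bind_weighted valid2 _ (fun pq : seq T * seq T => ksign K k (mdeg d pq.1))
          (fun pq : seq T * seq T => tprod (f pq.1) (g pq.2))).
Qed.

Lemma coef_tens_cop n2 (f g : lmap K n n2) k (m : seq T) p q : valid d m ->
  coef (tens d f g k (cop K d m)) (p, q) =
  cop_sum d m (fun u w => ksign K k (mdeg d u) * (coef (f u) p * coef (g w) q)).
Proof.
move=> vm; rewrite coefE wsum_tens wsum_cop //.
by apply: cop_sum_ext => u w; rewrite -coefE coef_tprod.
Qed.

Lemma coef_lapp n2 (f : lmap K n n2) s y :
  coef (lapp d f s) y = wsum (valid d) s (fun x => coef (f x) y).
Proof. exact: coef_bind. Qed.

Lemma coef_copS s pq : coef (copS d s) pq = wsum (valid d) s (fun x => coef (cop K d x) pq).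
Proof. exact: coef_bind. Qed.

Lemma coef_ladd n2 (f g : lmap K n n2) x y : coef (ladd f g x) y = coef (f x) y + coef (g x) y.
Proof. exact: coef_cat. Qed.

Lemma coef_lscale n2 c (f : lmap K n n2) x y : coef (lscale c f x) y = c * coef (f x) y.
Proof. exact: coef_fscale. Qed.

Lemma coef_lcomp n2 n3 (d2 : 'I_n2 -> int) (g : lmap K n2 n3) (f : lmap K n n2) x y :
  coef (lcomp d2 g f x) y = wsum (valid d2) (f x) (fun z => coef (g z) y).
Proof. exact: coef_bind. Qed.

End LinearMaps.

Section OOperator.
Variables (K : numFieldType) (nE nV : nat) (dE : 'I_nE -> int) (dV : 'I_nV -> int)
  (ME : lmap K nE nE) (MV : lmap K nV nV) (Phi : seq 'I_nE -> lmap K nV nV)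
  (T : lmap K nV nE).
Hypotheses (hMV : lie_inf dV MV) (hact : is_action dE dV ME MV Phi)
  (hO : O_operator dE dV ME MV Phi T).

Local Notation vV := (valid dV).
Local Notation vE := (valid dE).
Local Notation SV := (seq 'I_nV).
Local Notation SE := (seq 'I_nE).
Local Notation CS := (cop_sum dV).
Local Notation LID := (@lid K nV).
Local Notation PT := (PhiT dE dV Phi T).
Local Notation MVT := (ladd PT MV).
Local Notation PhiTu u z := (Phis dE Phi (T u) z).

Lemma wsum_Phis Q s z g : wsum Q (Phis dE Phi s z) g = wsum vE s (fun x => wsum Q (Phi x z) g).
Proof. exact: wsum_bind. Qed.

Lemma coef_Phis s z y : coef (Phis dE Phi s z) y = wsum vE s (fun x => coef (Phi x z) y).
Proof. exact: coef_bind. Qed.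

Lemma wsum_PT Q v g : wsum Q (PT v) g = CS v (fun u z => wsum Q (PhiTu u z) g).
Proof.
rewrite /PhiT /cop_sum; case: ifP => [/(cop_small K dV) -> | _]; first by rewrite /wsum !big_nil.
rewrite /wsum big_flatten /= big_map; apply: eq_bigr => a _.
by rewrite -/(wsum Q _ g) wsum_fscale.
Qed.

Lemma coef_PT v y : coef (PT v) y = CS v (fun u z => coef (PhiTu u z) y).
Proof. by rewrite coefE wsum_PT; apply: cop_sum_ext => u z; rewrite -coefE. Qed.

Lemma hdegT : hdeg dV dE T 0. Proof. by case: hO => -[]. Qed.
Lemma hdegMV : hdeg dV dV MV 1. Proof. by case: hMV => -[]. Qed.
Lemma coderPhi x : vE x -> is_coder dV (Phi x) (mdeg dE x + 1).
Proof. by case: hact => h _ /h. Qed.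

(* T has degree 0: pairing with T u only sees monomials of degree |u|. *)
Lemma wsum_Tdeg u (g g' : SE -> K) : vV u ->
  (forall x, vE x -> mdeg dE x = mdeg dV u -> g x = g' x) ->
  wsum vE (T u) g = wsum vE (T u) g'.
Proof.
move=> vu h; apply: wsum_supp => x vx cx; apply: h => //.
by rewrite (hdegT vu vx cx) addr0.
Qed.

(* M_{V^T} has degree 1: so do M_V and each term Phi_{T(v1)} v2. *)
Lemma MVT_hdeg : hdeg dV dV MVT 1.
Proof.
move=> m p vm vp; rewrite coef_ladd.
have [h0|hnz] := eqVneq (coef (MV m) p) 0; last by move=> _; exact: hdegMV.
rewrite h0 addr0 coef_PT /cop_sum => /sum_neq0_witness [a am].
rewrite mulf_eq0 negb_or => /andP[_].
rewrite coef_Phis => /wsum_neq0_witness [x [vx cx cp]].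
case/andP: (cop_valid vm am) => v1 v2.
have e1 := hdegT v1 vx cx; have e2 := (coderPhi vx).1 _ _ v2 vp cp.
by rewrite e2 e1 -(cop_mdeg am); lia.
Qed.

(* The coproduct of Phi^T m, expanded with the coderivation property of each
   Phi_x: a double sum over the iterated coproduct of m. *)
Lemma cop_PT_expand m p q : vV m -> vV p -> vV q ->
  wsum vV (PT m) (fun w => coef (cop K dV w) (p, q)) =
  CS m (fun u z => CS z (fun a b =>
    wsum vE (T u) (fun x => coef (Phi x a) p * coef (LID b) q))) +
  CS m (fun u z => CS z (fun a b => ksign K (mdeg dV u + 1) (mdeg dV a) *
    (coef (LID a) p * coef (PhiTu u b) q))).
Proof.
move=> vm vp vq; rewrite wsum_PT -cop_sumD; apply: cop_sum_ext_in => a am.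
case/andP: (cop_valid vm am) => v1 v2; rewrite wsum_Phis -!wsum_cop_sum.
rewrite [X in _ = _ + X](_ : _ = wsum vE (T a.2.1) (fun x => CS a.2.2 (fun a0 b =>
    ksign K (mdeg dE x + 1) (mdeg dV a0) * (coef (LID a0) p * coef (Phi x b) q)))).
  rewrite -wsumD; apply: wsum_ext => x vx.
  rewrite -coef_copS ((coderPhi vx).2 _ v2 _ _ vp vq) coef_cat !coef_tens_cop //.
  by congr (_ + _); apply: cop_sum_ext => a0 b; rewrite ksign0 mul1r.
rewrite wsum_cop_sum; apply: cop_sum_ext => a0 b; rewrite coef_Phis -!wsumZ.
by apply: wsum_Tdeg => // x vx ->.
Qed.

Lemma PT_coder m p q : vV m -> vV p -> vV q ->
  wsum vV (PT m) (fun w => coef (cop K dV w) (p, q)) =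
  coef (tens dV PT LID 0 (cop K dV m)) (p, q) + coef (tens dV LID PT 1 (cop K dV m)) (p, q).
Proof.
move=> vm vp vq; rewrite cop_PT_expand // !coef_tens_cop //; congr (_ + _).
  rewrite cop_sum_coassoc; apply: cop_sum_ext => u z.
  rewrite ksign0 mul1r coef_PT mulrC -cop_sumZ; apply: cop_sum_ext => a b.
  by rewrite coef_Phis -wsumZ; apply: wsum_ext => x _; exact: mulrC.
transitivity (CS m (fun u z => CS z (fun a b =>
  ksign K 1 (mdeg dV u) * coef (LID u) p * coef (PhiTu a b) q))).
  rewrite !cop_sum_coassoc; apply: cop_sum_ext => u z.
  rewrite cop_sum_cocomm; apply: cop_sum_ext => a b.
  by rewrite swap_signE !mulrA ksign_swap_succ -mulrA mulrCA mulrA.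
by apply: cop_sum_ext => u z; rewrite coef_PT mulrA -cop_sumZ.
Qed.

Lemma MVT_coder : is_coder dV MVT 1.
Proof.
split; first exact: MVT_hdeg.
move=> m vm p q vp vq.
rewrite coef_copS /ladd wsum_cat -[wsum _ (MV m) _]coef_copS (hMV.1.2 _ vm _ _ vp vq).
rewrite PT_coder // !coef_cat !coef_tens_cop //.
under [X in _ = X + _]cop_sum_ext do rewrite coef_cat mulrDl mulrDr.
under [X in _ = _ + X]cop_sum_ext do rewrite coef_cat mulrDr mulrDr.
by rewrite !cop_sumD addrACA; congr (_ + _); rewrite addrC.
Qed.

(* Pairing M_{V^T} v with Phi^T: by the coderivation property of M_{V^T},
   M_{V^T} acts on either side of each coproduct term of v. *)
Lemma MVT_then_PT v y : vV v ->
  wsum vV (MVT v) (fun w => coef (PT w) y) =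
  CS v (fun u z => wsum vV (MVT u) (fun e => coef (PhiTu e z) y) +
                   ksign K 1 (mdeg dV u) * wsum vV (MVT z) (fun e => coef (PhiTu u e) y)).
Proof.
move=> vv0.
transitivity (wsum (valid2 dV) (copS dV (MVT v)) (fun pq => coef (PhiTu pq.1 pq.2) y)).
  rewrite /copS wsum_bind; apply: wsum_ext => w vw; rewrite coef_PT wsum_cop //.
rewrite (wsum_eq _ (s' := tens dV MVT LID 0 (cop K dV v) ++ tens dV LID MVT 1 (cop K dV v)));
  last by move=> [p q] /andP[vp vq]; exact: (MVT_coder.2 _ vv0 _ _ vp vq).
rewrite wsum_cat !wsum_tens !wsum_cop // -cop_sumD; apply: cop_sum_ext_in => a am.
case/andP: (cop_valid vv0 am) => v1 v2.
rewrite !wsum_tprod ksign0 mul1r wsum_lid //; congr (_ + _ * _).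
by apply: wsum_ext => e _; rewrite wsum_lid.
Qed.

Definition MPhi (x : SE) (z y : SV) := coef (lapp dV MV (Phi x z)) y.
Definition PhiM (x : SE) (z y : SV) := coef (lapp dV (Phi x) (MV z)) y.
Definition PhiPhi (x x' : SE) (z y : SV) := coef (lapp dV (Phi x) (Phi x' z)) y.
Definition TPhiTPhi (u a b y : SV) :=
  wsum vE (T u) (fun x => wsum vE (T a) (fun x' => PhiPhi x x' b y)).

(* Pairing M_{V^T} v with M_V: only M_V Phi^T survives since M_V^2 = 0. *)
Lemma MVT_then_MV v y : vV v -> vV y ->
  wsum vV (MVT v) (fun w => coef (MV w) y) = CS v (fun u z => wsum vE (T u) (fun x => MPhi x z y)).
Proof.
move=> vv0 vy; rewrite /ladd wsum_cat -[wsum _ (MV v) _]coef_lapp.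
rewrite -/(lcomp dV MV MV v) (hMV.2 _ vv0 _ vy) /coef big_nil addr0 wsum_PT.
by apply: cop_sum_ext => u z; rewrite wsum_Phis; apply: wsum_ext => x _; rewrite /MPhi coef_lapp.
Qed.

Lemma MVT_into_right u z y : wsum vV (MVT z) (fun e => coef (PhiTu u e) y) =
  wsum vE (T u) (fun x => PhiM x z y) + CS z (fun a b => TPhiTPhi u a b y).
Proof.
under wsum_ext do rewrite coef_Phis.
rewrite -wsum_exchange addrC -wsum_cop_sum -wsumD; apply: wsum_ext => x _.
rewrite /ladd wsum_cat -[wsum _ (MV z) _]coef_lapp -/(PhiM x z y) wsum_PT; congr (_ + _).
apply: cop_sum_ext => a b; rewrite wsum_Phis; apply: wsum_ext => x' _.
by rewrite /PhiPhi coef_lapp.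
Qed.

(* T is a comorphism: pairing T u with a coproduct sum splits along Delta u. *)
Lemma wsum_T_cop u (G : SE -> SE -> K) : vV u ->
  wsum vE (T u) (fun x => cop_sum dE x G) =
  CS u (fun u1 u2 => wsum vE (T u1) (fun x1 => wsum vE (T u2) (fun x2 => G x1 x2))).
Proof.
move=> vu; transitivity (wsum (valid2 dE) (copS dE (T u)) (fun pq => G pq.1 pq.2)).
  by rewrite /copS wsum_bind; apply: wsum_ext => x vx; rewrite wsum_cop.
rewrite (wsum_eq _ (s' := tens dV T T 0 (cop K dV u)));
  last by move=> [p q] /andP[vp vq]; exact: (hO.1.2 _ vu _ _ vp vq).
rewrite wsum_tens wsum_cop //; apply: cop_sum_ext => u1 u2.
by rewrite ksign0 mul1r wsum_tprod.
Qed.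

Lemma coef_flat_half (s : fsum K (SE * SE)) (f : SE * SE -> fsum K SV) y :
  coef (flatten [seq fscale (a.1 / 2) (f a.2) | a <- s]) y =
  \sum_(a <- s) a.1 * (2^-1 * coef (f a.2) y).
Proof.
rewrite coefE /wsum big_flatten /= big_map; apply: eq_bigr => a _.
by rewrite -[LHS]/(wsum (pred1 y) (fscale (a.1 / 2) (f a.2)) (fun _ => 1)) wsum_fscale -coefE mulrA.
Qed.

(* The action identity Phi_{M_E x} = d Phi_x + 1/2 [Phi_x1, Phi_x2], as
   coefficients. *)
Lemma action_coef x z y : vE x -> vV z -> vV y ->
  coef (Phis dE Phi (ME x) z) y =
  - MPhi x z y + sgz K (mdeg dE x + 1) * PhiM x z y +
  cop_sum dE x (fun x1 x2 => 2^-1 * (sgz K (mdeg dE x1 + 1) *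
     (PhiPhi x1 x2 z y - ksign K (mdeg dE x1 + 1) (mdeg dE x2 + 1) * PhiPhi x2 x1 z y))).
Proof.
move=> vx vz vy; rewrite (hact.2 _ vx _ vz _ vy) coef_ladd /dgla_d !coef_ladd !coef_lscale.
rewrite !coef_lcomp -!coef_lapp -/(MPhi x z y) -/(PhiM x z y) mulN1r; congr (_ + _).
rewrite (coef_flat_half _ (fun pq : SE * SE => dgla_br dV (Phi pq.1) (Phi pq.2)
  (mdeg dE pq.1 + 1) (mdeg dE pq.2 + 1) z)).
apply: eq_bigr => a _; congr (_ * (_ * _)).
rewrite /dgla_br coef_lscale coef_ladd coef_lscale !coef_lcomp -!coef_lapp.
by rewrite /sgz /PhiPhi mulNr.
Qed.

(* M_{V^T} applied to the first argument of Phi_{T(.)}: by the O-operator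
   identity T M_{V^T} = M_E T, this is Phi_{M_E T u}, which the action
   identity expands. *)
Lemma MVT_into_left u z y : vV u -> vV z -> vV y ->
  wsum vV (MVT u) (fun e => coef (PhiTu e z) y) =
  wsum vE (T u) (fun x => - MPhi x z y + sgz K (mdeg dV u + 1) * PhiM x z y) +
  CS u (fun u1 u2 => 2^-1 * (sgz K (mdeg dV u1 + 1) *
    (TPhiTPhi u1 u2 z y - ksign K (mdeg dV u1 + 1) (mdeg dV u2 + 1) * TPhiTPhi u2 u1 z y))).
Proof.
move=> vu vz vy; under wsum_ext do rewrite coef_Phis.
transitivity (wsum vE (lapp dV T (MVT u)) (fun x => coef (Phi x z) y)).
  by rewrite /lapp wsum_bind.
rewrite (wsum_eq _ (s' := lapp dE ME (T u))); last by move=> x vx; rewrite (hO.2 _ vu _ vx).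
rewrite /lapp wsum_bind.
transitivity (wsum vE (T u) (fun x => - MPhi x z y + sgz K (mdeg dV u + 1) * PhiM x z y) +
  wsum vE (T u) (fun x => cop_sum dE x (fun x1 x2 => 2^-1 * (sgz K (mdeg dE x1 + 1) *
     (PhiPhi x1 x2 z y - ksign K (mdeg dE x1 + 1) (mdeg dE x2 + 1) * PhiPhi x2 x1 z y))))).
  by rewrite -wsumD; apply: wsum_Tdeg => // x vx ex; rewrite -coef_Phis action_coef // ex.
rewrite wsum_T_cop //; congr (_ + _); apply: cop_sum_ext_in => a am.
case/andP: (cop_valid vu am) => v1 v2.
transitivity (wsum vE (T a.2.1) (fun x1 => wsum vE (T a.2.2) (fun x2 =>
  2^-1 * (sgz K (mdeg dV a.2.1 + 1) * (PhiPhi x1 x2 z y -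
    ksign K (mdeg dV a.2.1 + 1) (mdeg dV a.2.2 + 1) * PhiPhi x2 x1 z y))))).
  by apply: wsum_Tdeg => // x1 _ e1; apply: wsum_Tdeg => // x2 _ e2; rewrite e1 e2.
rewrite /TPhiTPhi [X in _ - _ * X]wsum_exchange.
by apply: wsum_comb => x1; exact: wsum_comb.
Qed.

(* After the M_V-terms cancel, (M_{V^T})^2 v is a double coproduct sum of the
   quadratic terms T(u1)T(u2) Phi Phi. *)
Lemma MVT_square_expand v y : vV v -> vV y ->
  coef (lcomp dV MVT MVT v) y =
  CS v (fun u z => CS u (fun u1 u2 => 2^-1 * (sgz K (mdeg dV u1 + 1) *
     (TPhiTPhi u1 u2 z y - ksign K (mdeg dV u1 + 1) (mdeg dV u2 + 1) * TPhiTPhi u2 u1 z y))) +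
   CS z (fun a b => ksign K 1 (mdeg dV u) * TPhiTPhi u a b y)).
Proof.
move=> vv0 vy; rewrite coef_lcomp; under wsum_ext do rewrite coef_ladd.
rewrite (wsumD _ _ (fun w => coef (PT w) y) (fun w => coef (MV w) y)).
rewrite MVT_then_PT // MVT_then_MV // -cop_sumD; apply: cop_sum_ext_in => a am.
case/andP: (cop_valid vv0 am) => v1 v2.
rewrite MVT_into_left // MVT_into_right // cop_sumZ.
rewrite (wsumD _ _ (fun x => - MPhi x a.2.2 y) (fun x => sgz K (mdeg dV a.2.1 + 1) * PhiM x a.2.2 y)).
by rewrite wsumN wsumZ sgz_succ; ring.
Qed.

(* The two quadratic sums cancel: halving the bracket and using graded
   cocommutativity turns the first into the opposite of the second. *)
Lemma bracket_cancel p q y : vV p ->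
  CS p (fun u1 u2 => 2^-1 * (sgz K (mdeg dV u1 + 1) *
     (TPhiTPhi u1 u2 q y - ksign K (mdeg dV u1 + 1) (mdeg dV u2 + 1) * TPhiTPhi u2 u1 q y))) +
  CS p (fun u1 u2 => ksign K 1 (mdeg dV u1) * TPhiTPhi u1 u2 q y) = 0.
Proof.
move=> vp; set X := CS p (fun u1 u2 => ksign K 1 (mdeg dV u1) * TPhiTPhi u1 u2 q y).
rewrite (@cop_sum_ext _ _ _ _ _ (fun u1 u2 =>
    - (2^-1 * (ksign K 1 (mdeg dV u1) * TPhiTPhi u1 u2 q y)) +
    - (2^-1 * (sgz K (mdeg dV u1 + 1) * ksign K (mdeg dV u1 + 1) (mdeg dV u2 + 1) *
         TPhiTPhi u2 u1 q y)))); last first.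
  by move=> u1 u2; rewrite sgz_succ !mulrBr mulNr mulrN !mulrA.
rewrite cop_sumD !cop_sumN cop_sumZ -/X cop_sum_cocomm.
rewrite (@cop_sum_ext _ _ _ _ _ (fun u1 u2 => 2^-1 * (ksign K 1 (mdeg dV u1) * TPhiTPhi u1 u2 q y))).
  by rewrite cop_sumZ -/X -opprD !(mulrC 2^-1) -splitr addNr.
move=> u1 u2; rewrite !swap_signE -(ksign_swap_shift K (mdeg dV u1) (mdeg dV u2)) mulrCA.
by congr (_ * _); rewrite !mulrA.
Qed.

Lemma MVT_square_zero : eqL dV dV (lcomp dV MVT MVT) (lzero K nV).
Proof.
move=> v vv0 y vy; rewrite MVT_square_expand // [RHS]/coef big_nil.
rewrite cop_sumD cop_sum_coassoc -cop_sumD.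
rewrite (@cop_sum_ext_in _ _ _ _ _ (fun _ _ => 0)) ?cop_sum0 // => a am.
by case/andP: (cop_valid vv0 am) => v1 _; exact: bracket_cancel.
Qed.

End OOperator.

Close Scope ring_scope.
Unset Implicit Arguments.

Theorem mainTheorem6 (K : numFieldType) (nE nV : nat)
  (dE : 'I_nE -> int) (dV : 'I_nV -> int)
  (ME : lmap K nE nE) (MV : lmap K nV nV)
  (Phi : seq 'I_nE -> lmap K nV nV) (T : lmap K nV nE) :
  lie_inf dE ME -> lie_inf dV MV ->
  is_action dE dV ME MV Phi ->
  O_operator dE dV ME MV Phi T ->
  lie_inf dV (ladd (PhiT dE dV Phi T) MV) /\
  lie_inf_morph dV dE (ladd (PhiT dE dV Phi T) MV) ME T.
Proof.
move=> _ hMV hact hO; split.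
  split; [exact: (MVT_coder hMV hact hO) | exact: (MVT_square_zero hMV hact hO)].
split; first exact: hO.1.
by move=> m vm p vp; rewrite (hO.2 _ vm _ vp).
Qed.
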